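(* Let $S = R\cup B$ be a finite set of points in the plane in general position (no three collinear), colored red ($R$) and blue ($B$), with $R$ and $B$ linearly separable. Suppose there exist $r\in R$, $b\in B$, an edge $e$ of $CH(R)$ and an edge $e'$ of $CH(B)$ such that the interiors of $e$ and of $e'$ both intersect the interior of the segment $\overline{rb}$. Then condition C1 or condition C2 holds.
   Context: A $4$-hole of $S$ is a simple quadrilateral with vertices in $S$ and no point of $S$ in its interior; it is convex if the quadrilateral is convex, and balanced if it has exactly two red and two blue vertices. $CH(X)$ is the convex hull of $X$; $\Delta xyz$ is the open triangle with vertices $x,y,z$; for non-collinear $a,b,c$, $\mathcal{W}(a,b,c)$ is the open convex region bounded by the rays from $a$ through $b$ and from $a$ through $c$. An edge $e$ of $CH(R)$ and an edge $e'$ of $CH(B)$ see each other if the union of their vertex sets is the vertex set of a balanced convex $4$-hole whose interior intersects neither $CH(R)$ nor $CH(B)$. Condition C1: there exist an edge $e$ of $CH(R)$ and an edge $e'$ of $CH(B)$ that see each other. Condition C2: there exist an edge $\overline{uv}$ of $CH(R)$ and points $b,z\in B$ with $z\in\Delta uvb$, $R\cap\Delta uvb=\emptyset$ and $R\cap\mathcal{W}(b,u,v)\ne\emptyset$; or the same statement holds with the roles of $R$ and $B$ swapped. *)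

From HB Require Import structures.
From mathcomp Require Import all_boot all_order all_algebra.
From mathcomp Require Import reals.
Set Implicit Arguments. Unset Strict Implicit. Unset Printing Implicit Defensive.
Import Order.TTheory GRing.Theory Num.Theory.
Local Open Scope ring_scope.

Section Geo.
Variable R : realType.

Definition point := (R * R)%type.

(* twice the signed area of (p,q,r): > 0 iff counterclockwise *)
Definition orient (p q r : point) : R :=
  (q.1 - p.1) * (r.2 - p.2) - (q.2 - p.2) * (r.1 - p.1).

Definition general_position (S : seq point) : Prop :=
  forall x y z, x \in S -> y \in S -> z \in S ->
    x != y -> y != z -> x != z -> orient x y z != 0.

Definition lin_separable (Rs Bs : seq point) : Prop :=
  exists a b c : R, (a != 0 \/ b != 0) /\
    (forall p, p \in Rs -> 0 < a * p.1 + b * p.2 + c) /\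
    (forall p, p \in Bs -> a * p.1 + b * p.2 + c < 0).

Definition in_hull (X : seq point) (p : point) : Prop :=
  exists w : point -> R, (forall x, x \in X -> 0 <= w x) /\
    \sum_(x <- X) w x = 1 /\
    p = (\sum_(x <- X) w x * x.1, \sum_(x <- X) w x * x.2).

(* {u,v} is an edge of CH(X) (X in general position) *)
Definition hull_edge (X : seq point) (u v : point) : Prop :=
  u \in X /\ v \in X /\ u != v /\
  ((forall w, w \in X -> 0 <= orient u v w) \/
   (forall w, w \in X -> orient u v w <= 0)).

Definition open_seg (a b x : point) : Prop :=
  exists t : R, 0 < t < 1 /\
    x = ((1 - t) * a.1 + t * b.1, (1 - t) * a.2 + t * b.2).

Definition ccw_quad (p1 p2 p3 p4 : point) : Prop :=
  (0 < orient p1 p2 p3 /\ 0 < orient p1 p2 p4) /\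
  (0 < orient p2 p3 p4 /\ 0 < orient p2 p3 p1) /\
  (0 < orient p3 p4 p1 /\ 0 < orient p3 p4 p2) /\
  (0 < orient p4 p1 p2 /\ 0 < orient p4 p1 p3).

Definition quad_interior (p1 p2 p3 p4 x : point) : Prop :=
  0 < orient p1 p2 x /\ 0 < orient p2 p3 x /\
  0 < orient p3 p4 x /\ 0 < orient p4 p1 x.

(* the edge uv of CH(Rs) and the edge u'v' of CH(Bs) see each other:
   {u,v,u',v'} is the vertex set of a balanced convex 4-hole of S = Rs ++ Bs
   whose interior meets neither CH(Rs) nor CH(Bs). *)
Definition see_each_other (Rs Bs : seq point) (u v u' v' : point) : Prop :=
  hull_edge Rs u v /\ hull_edge Bs u' v' /\
  exists p1 p2 p3 p4 : point,
    perm_eq [:: p1; p2; p3; p4] [:: u; v; u'; v'] /\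
    ccw_quad p1 p2 p3 p4 /\
    (forall x, x \in Rs ++ Bs -> ~ quad_interior p1 p2 p3 p4 x) /\
    (forall x, quad_interior p1 p2 p3 p4 x -> ~ in_hull Rs x /\ ~ in_hull Bs x).

Definition cond_C1 (Rs Bs : seq point) : Prop :=
  exists u v u' v' : point, see_each_other Rs Bs u v u' v'.

Definition open_tri (a b c x : point) : Prop :=
  exists l1 l2 l3 : R, 0 < l1 /\ 0 < l2 /\ 0 < l3 /\ l1 + l2 + l3 = 1 /\
    x = (l1 * a.1 + l2 * b.1 + l3 * c.1, l1 * a.2 + l2 * b.2 + l3 * c.2).

Definition wedge (a b c x : point) : Prop :=
  exists s t : R, 0 < s /\ 0 < t /\
    x = (a.1 + s * (b.1 - a.1) + t * (c.1 - a.1),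
         a.2 + s * (b.2 - a.2) + t * (c.2 - a.2)).

Definition cond_C2_half (X Y : seq point) : Prop :=
  exists u v b z : point,
    hull_edge X u v /\ b \in Y /\ z \in Y /\ open_tri u v b z /\
    (forall x, x \in X -> ~ open_tri u v b x) /\
    (exists x, x \in X /\ wedge b u v x).

Definition cond_C2 (Rs Bs : seq point) : Prop :=
  cond_C2_half Rs Bs \/ cond_C2_half Bs Rs.

End Geo.

(* Orient the edge uv of CH(R) and the edge pq of CH(B) so that R lies to the left of uv and
   B to the left of pq, and let f be an affine function with f > 0 on R and f < 0 on B.
   If p and q lie strictly to the right of uv and u and v strictly to the right of pq, then
   v u q p is a balanced convex 4-hole whose interior avoids both hulls: C1.
   Otherwise, say p lies on the red side of uv.  Since rb crosses uv before pq, the endpoint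
   v on the same side of rb as p lies in the open triangle p q r; this triangle lies to the
   right of pq, so it contains no blue point, and b lies in the wedge W(r, p, q): C2 with
   the colours exchanged.  The case of q is the mirror image, and the case where u or v lies
   on the blue side of pq follows by exchanging the colours. *)

From HB Require Import structures.
From mathcomp Require Import all_boot all_order all_algebra.
From mathcomp Require Import reals.
From mathcomp Require Import ring lra.
Set Implicit Arguments. Unset Strict Implicit. Unset Printing Implicit Defensive.
Import Order.TTheory GRing.Theory Num.Theory.
Local Open Scope ring_scope.

Section Geometry.
Variable R : realType.
Implicit Types (a b c d p q r u v w x y z : point R) (f : point R -> R)
  (X Y : seq (point R)).

Definition affine f := exists al be ga : R, forall p, f p = al * p.1 + be * p.2 + ga.

Lemma neq0_lt0 (e : R) : e != 0 -> ~ 0 < e -> e < 0.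
Proof. by move=> e0 /negP; rewrite -leNgt le_eqVlt (negPf e0). Qed.

Lemma orient_xyx a c : orient a c a = 0.
Proof. rewrite /orient; ring. Qed.

Lemma orient_xyy a c : orient a c c = 0.
Proof. rewrite /orient; ring. Qed.

Lemma orient_cycle a c d : orient a c d = orient c d a.
Proof. rewrite /orient; ring. Qed.

Lemma orient_swapl a c d : orient c a d = - orient a c d.
Proof. rewrite /orient; ring. Qed.

Lemma orient_swapr a c d : orient a d c = - orient a c d.
Proof. rewrite /orient; ring. Qed.

Lemma affine_orient a c : affine (orient a c).
Proof.
exists (- (c.2 - a.2)), (c.1 - a.1), (a.1 * (c.2 - a.2) - a.2 * (c.1 - a.1)) => p.
rewrite /orient; ring.
Qed.

Lemma affineN f : affine f -> affine (fun p => - f p).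
Proof. by move=> [al [be [ga hf]]]; exists (- al), (- be), (- ga) => p; rewrite hf; ring. Qed.

Lemma open_seg_affine a c x : open_seg a c x ->
  exists t, 0 < t < 1 /\ forall f, affine f -> f x = (1 - t) * f a + t * f c.
Proof.
move=> [t [t01 ->]]; exists t; split => // f [al [be [ga hf]]].
rewrite !hf /=; ring.
Qed.

Lemma affine_open_seg_gt0 f a c x : affine f -> open_seg a c x ->
  0 <= f a -> 0 < f c -> 0 < f x.
Proof.
move=> hf /open_seg_affine [t [/andP [t0 t1] fx]] fa fc; rewrite fx //.
by apply: ltr_wpDl; [apply: mulr_ge0; lra | exact: mulr_gt0].
Qed.

Lemma affine_open_seg_lt0 f a c x : affine f -> open_seg a c x ->
  f a <= 0 -> f c < 0 -> f x < 0.
Proof.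
move=> hf /open_seg_affine [t [/andP [t0 t1] fx]] fa fc; rewrite fx //.
by apply: ltr_wnDl; [apply: mulr_ge0_le0; lra | rewrite pmulr_rlt0].
Qed.

Lemma open_seg_sym a c x : open_seg a c x -> open_seg c a x.
Proof.
move=> [t [/andP [t0 t1] ->]]; exists (1 - t); split; first by apply/andP; lra.
congr (_, _); ring.
Qed.

Lemma open_tri_of_orient a c d p :
  0 < orient p c d * orient a c d -> 0 < orient a p d * orient a c d ->
  0 < orient a c p * orient a c d -> open_tri a c d p.
Proof.
set K := orient a c d => h1 h2 h3.
have coord e : 0 < e * K -> 0 < e / K.
  case: (ltgtP K 0) => [Kn|Kp|->]; last by rewrite mulr0 ltxx.
    by rewrite (nmulr_lgt0 _ Kn) => en; rewrite nmulr_lgt0 // invr_lt0.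
  by rewrite (pmulr_lgt0 _ Kp) => ep; rewrite pmulr_lgt0 // invr_gt0.
have K0 : K != 0 by apply/eqP => K0; move: h1; rewrite K0 mulr0 ltxx.
exists (orient p c d / K), (orient a p d / K), (orient a c p / K).
do 3! (split; first exact: coord).
split.
  rewrite -!mulrDl.
  have -> : orient p c d + orient a p d + orient a c p = K by rewrite /K /orient; ring.
  exact: divff.
move: K0; rewrite /K /orient => K0.
by apply: injective_projections => /=; field.
Qed.

Lemma affine_barycentric f a c d p : affine f ->
  orient a c d * f p = orient p c d * f a + orient a p d * f c + orient a c p * f d.
Proof. by move=> [al [be [ga hf]]]; rewrite !hf /orient; ring. Qed.

Lemma affine_open_tri_gt0 f a c d p : affine f -> open_tri a c d p ->
  0 <= f a -> 0 <= f c -> 0 < f d -> 0 < f p.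
Proof.
move=> [al [be [ga hf]]] [l1 [l2 [l3 [l10 [l20 [l30 [l1s ->]]]]]]] fa fc fd.
have -> : f (l1 * a.1 + l2 * c.1 + l3 * d.1, l1 * a.2 + l2 * c.2 + l3 * d.2) =
    l1 * f a + l2 * f c + l3 * f d.
  by rewrite !hf /= (_ : l1 = 1 - l2 - l3); [ring | lra].
by rewrite ltr_wpDl ?mulr_gt0 // addr_ge0 // mulr_ge0 // ltW.
Qed.

(* [v] lies in the angle at [r] spanned by [p] and [y], beyond the line [p y]. *)
Lemma affine_lt0_past_edge f r p y v : affine f ->
  orient r p y < 0 -> 0 < orient v p y -> orient r v y <= 0 -> orient r p v <= 0 ->
  0 < f r -> f p < 0 -> f y < 0 -> f v < 0.
Proof.
move=> hf rpy vpy rvy rpv fr fp fy.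
have : 0 < orient r p y * f v.
  rewrite (affine_barycentric r p y v hf) -addrA ltr_pwDl ?mulr_gt0 //.
  by rewrite addr_ge0 // mulr_le0 // ltW.
by rewrite nmulr_rgt0.
Qed.

Lemma affine_hull_ge0 f X x : affine f ->
  (forall p, p \in X -> 0 <= f p) -> in_hull X x -> 0 <= f x.
Proof.
move=> [al [be [ga hf]]] fX [w [w0 [w1 ->]]].
have -> : f (\sum_(p <- X) w p * p.1, \sum_(p <- X) w p * p.2) = \sum_(p <- X) w p * f p.
  rewrite hf [RHS](eq_bigr (fun p => al * (w p * p.1) + be * (w p * p.2) + ga * w p));
    last by move=> p _; rewrite hf; ring.
  by rewrite !big_split /= -!mulr_sumr w1 mulr1.
by rewrite big_seq sumr_ge0 // => p pX; rewrite mulr_ge0 ?w0 ?fX.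
Qed.

Lemma wedge_of_open_segs r b p q y :
  open_seg p q y -> open_seg r b y -> wedge r p q b.
Proof.
move=> [t [/andP [t0 t1] ->]] [s [/andP [s0 s1] /pair_equal_spec [e1 e2]]].
have s0' : s != 0 by rewrite gt_eqF.
exists ((1 - t) / s), (t / s); do 2! (split; first by rewrite divr_gt0 // subr_gt0).
have b1 : b.1 = ((1 - t) * p.1 + t * q.1 - (1 - s) * r.1) / s by rewrite e1; field.
have b2 : b.2 = ((1 - t) * p.2 + t * q.2 - (1 - s) * r.2) / s by rewrite e2; field.
by apply: injective_projections; rewrite /= ?b1 ?b2; field.
Qed.

Definition mirror p : point R := (p.1, - p.2).

Lemma mirrorK : involutive mirror.
Proof. by move=> [? ?]; rewrite /mirror opprK. Qed.

Lemma orient_mirror a c d : orient (mirror a) (mirror c) (mirror d) = - orient a c d.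
Proof. rewrite /orient /=; ring. Qed.

Lemma affine_mirror f : affine f -> affine (f \o mirror).
Proof.
by move=> [al [be [ga hf]]]; exists al, (- be), ga => p; rewrite /= hf /mirror /=; ring.
Qed.

Lemma open_seg_mirror a c x : open_seg a c x -> open_seg (mirror a) (mirror c) (mirror x).
Proof. by move=> [t [t01 ->]]; exists t; split => //; congr (_, _) => /=; ring. Qed.

Lemma open_tri_mirror a c d x :
  open_tri a c d x -> open_tri (mirror a) (mirror c) (mirror d) (mirror x).
Proof.
move=> [l1 [l2 [l3 [l10 [l20 [l30 [ls ->]]]]]]].
by exists l1, l2, l3; do 4! split => //; congr (_, _) => /=; ring.
Qed.

Lemma open_tri_swap a c d x : open_tri a c d x -> open_tri c a d x.
Proof.
move=> [l1 [l2 [l3 [l10 [l20 [l30 [ls ->]]]]]]].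
by exists l2, l1, l3; do 4! split => //; [lra | congr (_, _); ring].
Qed.

Lemma open_tri_orient_lt0 a c d w : orient a c d < 0 -> open_tri a c d w -> orient a c w < 0.
Proof.
move=> acd acdw; rewrite -oppr_gt0 -orient_swapl.
apply: (affine_open_tri_gt0 (affine_orient c a) acdw); rewrite ?orient_xyy ?orient_xyx //.
by rewrite orient_swapl oppr_gt0.
Qed.

Lemma open_segs_cross u v r b x : open_seg u v x -> open_seg r b x ->
  0 <= orient u v r -> orient u v b != 0 ->
  [/\ 0 < orient u v r, orient u v b < 0, 0 < orient r u b & orient r v b < 0].
Proof.
move=> /open_seg_affine [t [/andP [t0 t1] ht]] /open_seg_affine [s [/andP [s0 s1] hs]] r0 b0.
have : (1 - s) * orient u v r + s * orient u v b = 0.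
  rewrite -(hs _ (affine_orient u v)) (ht _ (affine_orient u v)).
  by rewrite orient_xyx orient_xyy !mulr0 addr0.
move=> e; have Db : orient u v b < 0.
  apply: (neq0_lt0 b0) => bpos.
  suff : 0 < (1 - s) * orient u v r + s * orient u v b by rewrite e ltxx.
  by rewrite ltr_wpDl ?mulr_ge0 ?mulr_gt0 // subr_ge0 ltW.
have Dr : 0 < orient u v r by nra.
have eu : s * orient r u b = t * orient u v r.
  move: (ht _ (affine_orient r u)); rewrite (hs _ (affine_orient r u)).
  by rewrite orient_xyx orient_xyy (orient_cycle r u v) !mulr0 !add0r.
have ev : s * orient r v b = - ((1 - t) * orient u v r).
  move: (ht _ (affine_orient r v)); rewrite (hs _ (affine_orient r v)).
  rewrite orient_xyx orient_xyy (orient_swapr r u v) (orient_cycle r u v).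
  by rewrite !mulr0 add0r addr0 mulrN.
split => //.
  by rewrite -(pmulr_rgt0 _ s0) eu mulr_gt0.
by rewrite -(pmulr_rlt0 _ s0) ev oppr_lt0 mulr_gt0 // subr_gt0.
Qed.

Lemma crossing_vertex_in_open_tri f r b u v p q x y : affine f ->
  0 < f r -> 0 < f u -> 0 < f v -> f p < 0 -> f q < 0 ->
  open_seg u v x -> open_seg r b x -> open_seg p q y -> open_seg r b y ->
  orient p q r < 0 -> orient r v b < 0 -> orient r p b < 0 -> 0 < orient u v p ->
  orient r p v != 0 -> orient r v q != 0 -> orient p q v != 0 ->
  open_tri p q r v.
Proof.
move=> hf fr fu fv fp fq sx rx sy ry pqr rvb rpb uvp rpv0 rvq0 pqv0.
have fx : 0 < f x := affine_open_seg_gt0 hf sx (ltW fu) fv.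
have fy : f y < 0 := affine_open_seg_lt0 hf sy (ltW fp) fq.
have rvy : orient r v y < 0.
  by apply: affine_open_seg_lt0 (affine_orient r v) ry _ rvb; rewrite orient_xyx.
have rpv : orient r p v < 0.
  apply: (neq0_lt0 rpv0) => rpv.
  (* otherwise p lies in the open triangle r x v, where f is positive *)
  suff : 0 < f p by rewrite ltNge (ltW fp).
  apply: (affine_open_tri_gt0 hf _ (ltW fr) (ltW fx) fv).
  have rxv : 0 < orient r x v.
    rewrite -orient_cycle; apply: affine_open_seg_gt0 (affine_orient v r) rx _ _.
      by rewrite orient_xyy.
    by rewrite orient_swapl oppr_gt0.
  apply: open_tri_of_orient; rewrite mulr_gt0 //.
  - rewrite -orient_cycle.
    apply: affine_open_seg_gt0 (affine_orient v p) (open_seg_sym sx) _ _.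
      by rewrite orient_xyx.
    by rewrite -orient_cycle.
  - rewrite -orient_cycle; apply: affine_open_seg_gt0 (affine_orient p r) rx _ _.
      by rewrite orient_xyy.
    by rewrite orient_swapl oppr_gt0.
have rvq : orient r v q < 0.
  apply: (neq0_lt0 rvq0) => rvq.
  suff : 0 < orient r v y by rewrite ltNge (ltW rvy).
  apply: affine_open_seg_gt0 (affine_orient r v) sy _ rvq.
  by rewrite orient_swapr oppr_ge0 ltW.
have pqv : orient p q v < 0.
  apply: (neq0_lt0 pqv0) => pqv.
  suff : f v < 0 by rewrite ltNge (ltW fv).
  apply: (affine_lt0_past_edge hf _ _ (ltW rvy) (ltW rpv) fr fp fy).
    apply: affine_open_seg_lt0 (affine_orient r p) sy _ _; first by rewrite orient_xyy.
    by rewrite orient_cycle.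
  apply: affine_open_seg_gt0 (affine_orient v p) sy _ _; first by rewrite orient_xyy.
  by rewrite orient_cycle.
by apply: open_tri_of_orient; rewrite nmulr_lgt0 // -orient_cycle.
Qed.

(* Reflection reverses orientations, so exchanging u with v and p with q reduces this to
   crossing_vertex_in_open_tri. *)
Lemma crossing_vertex_in_open_tri_mirror f r b u v p q x y : affine f ->
  0 < f r -> 0 < f u -> 0 < f v -> f p < 0 -> f q < 0 ->
  open_seg u v x -> open_seg r b x -> open_seg p q y -> open_seg r b y ->
  orient p q r < 0 -> 0 < orient r u b -> 0 < orient r q b -> 0 < orient u v q ->
  orient r q u != 0 -> orient r u p != 0 -> orient p q u != 0 ->
  open_tri p q r u.
Proof.
move=> hf fr fu fv fp fq sx rx sy ry pqr rub rqb uvq rqu0 rup0 pqu0.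
have fm z : (f \o mirror) (mirror z) = f z by rewrite /= mirrorK.
rewrite -[u]mirrorK -[p]mirrorK -[q]mirrorK -[r]mirrorK; apply/open_tri_mirror/open_tri_swap.
apply: (crossing_vertex_in_open_tri (b := mirror b) (u := mirror v) (v := mirror u)
  (x := mirror x) (y := mirror y) (affine_mirror hf)); rewrite ?fm ?orient_mirror //.
- exact/open_seg_mirror/open_seg_sym.
- exact: open_seg_mirror.
- exact/open_seg_mirror/open_seg_sym.
- exact: open_seg_mirror.
- by rewrite orient_swapl opprK.
- by rewrite oppr_lt0.
- by rewrite oppr_lt0.
- by rewrite orient_swapl opprK.
- by rewrite oppr_eq0.
- by rewrite oppr_eq0.
- by rewrite orient_swapl !oppr_eq0.
Qed.

Lemma general_position_catC X Y :
  general_position (X ++ Y) -> general_position (Y ++ X).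
Proof. by move=> gp a c d ha hc hd; apply: gp; rewrite mem_cat orbC -mem_cat. Qed.

Lemma hull_edge_oriented X u v x : hull_edge X u v -> open_seg u v x ->
  exists u1 v1, [/\ hull_edge X u1 v1, forall w, w \in X -> 0 <= orient u1 v1 w
                  & open_seg u1 v1 x].
Proof.
move=> [uX [vX [uv [uvX | vuX]]]] sx.
  by exists u, v; split => //; do 3! split => //; left.
exists v, u; split; last exact: open_seg_sym.
  by do 3! split => //; [rewrite eq_sym | left => w /vuX; rewrite orient_swapl oppr_le0].
by move=> w /vuX; rewrite orient_swapl oppr_le0.
Qed.

Lemma see_each_other_of_sides X Y u v p q :
  hull_edge X u v -> hull_edge Y p q ->
  (forall w, w \in X -> 0 <= orient u v w) -> (forall w, w \in Y -> 0 <= orient p q w) ->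
  orient u v p < 0 -> orient u v q < 0 -> orient p q u < 0 -> orient p q v < 0 ->
  see_each_other X Y u v p q.
Proof.
move=> eX eY uvX pqY uvp uvq pqu pqv; split => //; split => //.
exists v, u, q, p; split.
  change (perm_eq (([:: v] ++ [:: u]) ++ ([:: q] ++ [:: p]))
    (([:: u] ++ [:: v]) ++ ([:: p] ++ [:: q]))).
  by apply: perm_cat; rewrite perm_catC.
split; first by rewrite /ccw_quad; rewrite /orient in uvp uvq pqu pqv *; do !split; lra.
split.
  move=> z; rewrite mem_cat => /orP [zX | zY] [h1 [_ [h3 _]]].
    by move: h1; rewrite orient_swapl oppr_gt0 ltNge uvX.
  by move: h3; rewrite orient_swapl oppr_gt0 ltNge pqY.
move=> z [h1 [_ [h3 _]]]; split => hz.
  move: h1; rewrite orient_swapl oppr_gt0 ltNge.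
  by rewrite (affine_hull_ge0 (affine_orient u v) uvX hz).
move: h3; rewrite orient_swapl oppr_gt0 ltNge.
by rewrite (affine_hull_ge0 (affine_orient p q) pqY hz).
Qed.

Section Separated.
Variables (X Y : seq (point R)) (f : point R -> R).
Hypotheses (hf : affine f) (gpXY : general_position (X ++ Y))
  (fX : forall z, z \in X -> 0 < f z) (fY : forall z, z \in Y -> f z < 0).

Lemma separated_neq a c : a \in X -> c \in Y -> a != c.
Proof. by move=> aX cY; apply/eqP => ac; have := fX aX; rewrite ac ltNge ltW ?fY. Qed.

Lemma orient_XXY_neq0 a c d : a \in X -> c \in X -> d \in Y -> a != c -> orient a c d != 0.
Proof.
move=> aX cX dY ac; apply: gpXY; rewrite ?mem_cat ?aX ?cX ?dY ?orbT //; exact: separated_neq.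
Qed.

Lemma orient_YYX_neq0 a c d : a \in Y -> c \in Y -> d \in X -> a != c -> orient a c d != 0.
Proof.
move=> aY cY dX ac; apply: gpXY; rewrite ?mem_cat ?aY ?cY ?dX ?orbT // eq_sym.
all: exact: separated_neq.
Qed.

Lemma cond_C2_half_of_crossings r b u v p q x y :
  r \in X -> b \in Y -> hull_edge X u v -> hull_edge Y p q ->
  (forall w, w \in X -> 0 <= orient u v w) -> (forall w, w \in Y -> 0 <= orient p q w) ->
  open_seg u v x -> open_seg r b x -> open_seg p q y -> open_seg r b y ->
  0 < orient u v p \/ 0 < orient u v q -> cond_C2_half Y X.
Proof.
move=> rX bY eX eY uvX pqY sx rx sy ry side.
have [uX [vX [uv _]]] := eX; have [pY [qY [pq _]]] := eY.
have [uvr _ rub rvb] := open_segs_cross sx rx (uvX _ rX) (orient_XXY_neq0 uX vX bY uv).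
have [_ pqr bpr bqr] :=
  open_segs_cross sy (open_seg_sym ry) (pqY _ bY) (orient_YYX_neq0 pY qY rX pq).
have rpb : orient r p b < 0 by rewrite orient_cycle -oppr_gt0 -orient_swapl.
have rqb : 0 < orient r q b by rewrite orient_cycle -oppr_lt0 -orient_swapl.
have ru : r != u by apply: contraTneq uvr => ->; rewrite orient_xyx ltxx.
have rv : r != v by apply: contraTneq uvr => ->; rewrite orient_xyy ltxx.
suff [z zX zT] : exists2 z, z \in X & open_tri p q r z.
  exists p, q, r, z; do 4! split => //; split.
    by move=> w wY /(open_tri_orient_lt0 pqr); rewrite ltNge pqY.
  by exists b; split; last exact: wedge_of_open_segs sy ry.
case: side => [uvp | uvq].
  exists v => //.
  apply: (crossing_vertex_in_open_tri hf (fX rX) (fX uX) (fX vX) (fY pY) (fY qY)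
    sx rx sy ry pqr rvb rpb uvp).
  - by rewrite -orient_cycle orient_XXY_neq0 // eq_sym.
  - exact: orient_XXY_neq0.
  - exact: orient_YYX_neq0.
exists u => //.
apply: (crossing_vertex_in_open_tri_mirror hf (fX rX) (fX uX) (fX vX) (fY pY) (fY qY)
  sx rx sy ry pqr rub rqb uvq).
- by rewrite -orient_cycle orient_XXY_neq0 // eq_sym.
- exact: orient_XXY_neq0.
- exact: orient_YYX_neq0.
Qed.

End Separated.

Lemma C1_or_C2_of_crossings Rs Bs f r b u v p q x y : affine f ->
  general_position (Rs ++ Bs) ->
  (forall z, z \in Rs -> 0 < f z) -> (forall z, z \in Bs -> f z < 0) ->
  r \in Rs -> b \in Bs -> hull_edge Rs u v -> hull_edge Bs p q ->
  (forall w, w \in Rs -> 0 <= orient u v w) -> (forall w, w \in Bs -> 0 <= orient p q w) ->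
  open_seg u v x -> open_seg r b x -> open_seg p q y -> open_seg r b y ->
  cond_C1 Rs Bs \/ cond_C2 Rs Bs.
Proof.
move=> hf gp fR fB rR bB eR eB uvR pqB sx rx sy ry.
have [uR [vR [uv _]]] := eR; have [pB [qB [pq _]]] := eB.
case: (boolP ((0 < orient u v p) || (0 < orient u v q))) => [/orP side | ].
  right; right.
  exact: (cond_C2_half_of_crossings hf gp fR fB rR bB eR eB uvR pqB sx rx sy ry).
rewrite negb_or -!leNgt => /andP [uvp uvq].
case: (boolP ((0 < orient p q u) || (0 < orient p q v))) => [/orP side | ].
  right; left; apply: (cond_C2_half_of_crossings (affineN hf) (general_position_catC gp)
    _ _ bB rR eB eR pqB uvR sy (open_seg_sym ry) sx (open_seg_sym rx) side).
    by move=> z /fB; rewrite oppr_gt0.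
  by move=> z /fR; rewrite oppr_lt0.
rewrite negb_or -!leNgt => /andP [pqu pqv].
left; exists u, v, p, q; apply: see_each_other_of_sides => //; rewrite lt_neqAle.
- by rewrite uvp (orient_XXY_neq0 gp fR fB uR vR pB uv).
- by rewrite uvq (orient_XXY_neq0 gp fR fB uR vR qB uv).
- by rewrite pqu (orient_YYX_neq0 gp fR fB pB qB uR pq).
- by rewrite pqv (orient_YYX_neq0 gp fR fB pB qB vR pq).
Qed.

End Geometry.

Theorem lemma8 (R : realType) (Rs Bs : seq (point R)) :
  general_position (Rs ++ Bs) ->
  lin_separable Rs Bs ->
  forall (r b u v u' v' : point R),
    r \in Rs -> b \in Bs ->
    hull_edge Rs u v -> hull_edge Bs u' v' ->
    (exists x, open_seg u v x /\ open_seg r b x) ->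
    (exists x, open_seg u' v' x /\ open_seg r b x) ->
    cond_C1 Rs Bs \/ cond_C2 Rs Bs.
Proof.
move=> gp [al [be [ga [_ [hR hB]]]]] r b u v u' v' rR bB eR eB [x [sx rx]] [y [sy ry]].
have hf : affine (fun p : point R => al * p.1 + be * p.2 + ga) by exists al, be, ga.
have [u1 [v1 [eR1 uvR sx1]]] := hull_edge_oriented eR sx.
have [u2 [v2 [eB1 uvB sy1]]] := hull_edge_oriented eB sy.
exact: (C1_or_C2_of_crossings hf gp hR hB rR bB eR1 eB1 uvR uvB sx1 rx sy1 ry).
Qed.
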